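(* Assume $\|\varphi\|_{C^2([a,b])}<1$. Then there is a constant $C>0$ depending only on $\|w\|_{C^2([a,b])}$ such that, for every $s\in[0,1]$, every $x\in\mathbb R$ and every $0\le t\le t_0(s,x)$, $$|\partial_x\xi(t,x)-1|\le C\|\varphi\|_{C^2([a,b])},\qquad|\partial_x\eta(t,x)-w'(x)|\le C\|\varphi\|_{C^2([a,b])}.$$
   Context: Let $w\in C^3(\mathbb R)$ be periodic with $w>0$ on $[-1,1]$. Let $-1<a<b<1$ and let $\varphi:[a,b]\to\mathbb R$ be a polynomial with $\varphi^{(k)}(a)=\varphi^{(k)}(b)=0$ for $k=0,1,2,3$, extended by zero outside $[a,b]$. For $x\in\mathbb R$, $(\xi(t,x),\eta(t,x))$ is the unique global solution of $$\frac{d\xi}{dt}=-w'(\xi)\varphi(\xi)-(\eta-w(\xi))\varphi'(\xi),\quad\frac{d\eta}{dt}=\varphi(\xi),\quad \xi(0)=x,\ \eta(0)=w(x).$$ For $s\in[0,1]$, $t_0(s,x)\ge0$ denotes the first time $t\ge0$ with $\eta(t,x)=w(\xi(t,x))+s\varphi(\xi(t,x))$ (it exists and $t_0(s,x)\le s$). *)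

From Stdlib Require Import Reals List.
Import ListNotations.
Open Scope R_scope.

(* Polynomials as coefficient lists [c0; c1; ...; cn] (c0 + c1 x + ... ). *)
Definition peval (c : list R) (x : R) : R :=
  fold_right (fun a acc => a + x * acc) 0 c.

Fixpoint pderiv_aux (k : nat) (l : list R) : list R :=
  match l with
  | nil => nil
  | h :: t => INR k * h :: pderiv_aux (S k) t
  end.

Definition pderiv (c : list R) : list R :=
  match c with
  | nil => nil
  | _ :: t => pderiv_aux 1 t
  end.

Definition pderivn (k : nat) (c : list R) : list R := Nat.iter k pderiv c.

Definition ext_zero (p : R -> R) (a b x : R) : R :=
  if Rle_dec a x then (if Rle_dec x b then p x else 0) else 0.

(* phi = polynomial c on [a,b], extended by 0; phi' = its derivative
   (the derivative of the polynomial on [a,b], 0 outside; this is the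
   derivative of the extension thanks to the vanishing conditions). *)
Definition phi_ext (c : list R) (a b : R) : R -> R :=
  ext_zero (peval c) a b.
Definition dphi_ext (c : list R) (a b : R) : R -> R :=
  ext_zero (peval (pderiv c)) a b.

(* N is the sup-norm  max_{f in fs} sup_{[a,b]} |f|, i.e. the least upper bound
   of { |f x| : f in fs, x in [a,b] }.  With fs = [f; f'; f''] this is
   the C^2([a,b]) norm of f. *)
Definition is_sup_norm_on (fs : list (R -> R)) (a b N : R) : Prop :=
  is_lub (fun y => exists f x, In f fs /\ a <= x <= b /\ y = Rabs (f x)) N.

Definition is_first_time (xi eta : R -> R -> R) (w phi : R -> R)
    (s x t0 : R) : Prop :=
  0 <= t0 /\
  eta t0 x = w (xi t0 x) + s * phi (xi t0 x) /\
  (forall t, 0 <= t < t0 -> eta t x <> w (xi t x) + s * phi (xi t x)).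

(* Along the flow, xi' = G(xi) - eta phi'(xi) and eta' = phi(xi) with G = -w' phi + w phi'.
   For t0 > 0 the initial point x lies in [a,b], and t0 <= s <= 1: with sg the sign of phi(x),
   sg (eta - w(xi) - s phi(xi)) stays negative before the first time, which by two
   integrating-factor arguments makes sg phi(xi) and then sg (eta - w(xi) - t phi(xi)) nonnegative,
   a contradiction at t = s if t0 > s.
   Over a unit time interval the difference quotients in x of (xi, eta) solve, up to errors that
   are o(1) uniformly in time, a linear system whose coefficients are bounded by 3|w|_{C^2} + 2.
   Gronwall's inequality applied to the difference of two quotients shows that they are Cauchy,
   so xi and eta are differentiable in x; applied to (d_x xi - 1, d_x eta - w'(x)), whose forcing
   is O(|phi|_{C^2}), it gives the estimate. *)
From Stdlib Require Import Reals List Lia Lra Psatz.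
Import ListNotations.
From Coquelicot Require Import Coquelicot.
Open Scope R_scope.

Lemma derivable_pt_lim_val f x l l' :
  derivable_pt_lim f x l -> l = l' -> derivable_pt_lim f x l'.
Proof. now intros D <-. Qed.

Lemma abs_sub_le a b r r' : Rabs a <= r -> Rabs b <= r' -> Rabs (a - b) <= r + r'.
Proof.
  intros Ha Hb. pose proof (Rabs_triang a (- b)). rewrite Rabs_Ropp in *. unfold Rminus. lra.
Qed.

Lemma abs_div_le a h r : h <> 0 -> Rabs a <= r * Rabs h -> Rabs (a / h) <= r.
Proof.
  intros Hh H. pose proof (Rabs_pos_lt h Hh).
  unfold Rdiv. rewrite Rabs_mult, Rabs_inv.
  apply (Rmult_le_reg_r (Rabs h)); [lra|]. rewrite Rmult_assoc, Rinv_l; lra.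
Qed.

Lemma derivable_pt_lim_div_const f u l h :
  derivable_pt_lim f u l -> derivable_pt_lim (fun v => f v / h) u (l / h).
Proof.
  intros D. apply (derivable_pt_lim_ext (fun v => / h * f v)); [intros; unfold Rdiv; ring|].
  apply (derivable_pt_lim_val _ _ (/ h * l)); [|unfold Rdiv; ring].
  now apply (derivable_pt_lim_scal f).
Qed.

Lemma derivable_pt_lim_exp_lin k u :
  derivable_pt_lim (fun t => exp (k * t)) u (k * exp (k * u)).
Proof. apply is_derive_Reals. auto_derive; [easy | ring]. Qed.

Lemma le_of_derivative_nonpos h h' T : 0 <= T ->
  (forall u, 0 <= u <= T -> derivable_pt_lim h u (h' u)) ->
  (forall u, 0 <= u <= T -> h' u <= 0) -> h T <= h 0.
Proof.
  intros HT D N. destruct (Req_dec T 0) as [->|HT0]; [lra|].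
  destruct (MVT_cor2 h h' 0 T) as [c [E Hc]]; [lra | intros; apply D; lra |].
  assert (h' c <= 0) by (apply N; lra). nra.
Qed.

Lemma lipschitz_of_derivative_bound f f' M :
  (forall y, derivable_pt_lim f y (f' y)) -> (forall y, Rabs (f' y) <= M) ->
  forall u v, Rabs (f u - f v) <= M * Rabs (u - v).
Proof.
  intros D B u v. destruct (Rtotal_order u v) as [H|[->|H]].
  - destruct (MVT_cor2 f f' u v H (fun c _ => D c)) as [c [E _]].
    rewrite <- Rabs_Ropp, Ropp_minus_distr, E, Rabs_mult, (Rabs_minus_sym u v).
    apply Rmult_le_compat_r; [apply Rabs_pos | auto].
  - rewrite !Rminus_diag, Rabs_R0. lra.
  - destruct (MVT_cor2 f f' v u H (fun c _ => D c)) as [c [E _]].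
    rewrite E, Rabs_mult. apply Rmult_le_compat_r; [apply Rabs_pos | auto].
Qed.

Definition unif_continuous (f : R -> R) : Prop := uniform_continuity f (fun _ => True).

Lemma taylor_remainder_unif f f' : (forall y, derivable_pt_lim f y (f' y)) -> unif_continuous f' ->
  forall eps, 0 < eps -> exists del, 0 < del /\ forall u v, Rabs (u - v) < del ->
    Rabs (f u - f v - f' v * (u - v)) <= eps * Rabs (u - v).
Proof.
  intros D U eps Heps. destruct (U (mkposreal eps Heps)) as [d Hd].
  exists d. split; [apply cond_pos|]. intros u v Huv.
  assert (Hc : forall c, Rabs (c - v) <= Rabs (u - v) -> Rabs (f' c - f' v) <= eps).
  { intros c Hc. left. apply (Hd c v I I). lra. }
  destruct (Rtotal_order u v) as [Hlt|[->|Hgt]].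
  - destruct (MVT_cor2 f f' u v Hlt (fun c _ => D c)) as [c [E Hcuv]].
    replace (f u - f v - f' v * (u - v)) with ((f' c - f' v) * (u - v)) by lra.
    rewrite Rabs_mult. apply Rmult_le_compat_r; [apply Rabs_pos|]. apply Hc.
    rewrite !Rabs_left1; lra.
  - rewrite !Rminus_diag, Rmult_0_r, Rminus_0_r, Rabs_R0. lra.
  - destruct (MVT_cor2 f f' v u Hgt (fun c _ => D c)) as [c [E Hcuv]].
    replace (f u - f v - f' v * (u - v)) with ((f' c - f' v) * (u - v)) by lra.
    rewrite Rabs_mult. apply Rmult_le_compat_r; [apply Rabs_pos|]. apply Hc.
    rewrite !Rabs_right; lra.
Qed.

Lemma unif_continuous_of_compact_support f a b :
  (forall y, continuity_pt f y) -> (forall y, y < a \/ b < y -> f y = 0) -> unif_continuous f.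
Proof.
  intros Cf Z eps.
  destruct (Heine f (fun c => a - 1 <= c <= b + 1) (compact_P3 _ _) (fun y _ => Cf y) eps)
    as [d Hd].
  assert (Hd1 : 0 < Rmin d 1) by (apply Rmin_glb_lt; [apply cond_pos | lra]).
  exists (mkposreal _ Hd1). intros u v _ _ Huv; cbn in Huv.
  pose proof (Rmin_l d 1). pose proof (Rmin_r d 1). apply Rabs_def2 in Huv.
  destruct (Rle_dec (a - 1) u), (Rle_dec u (b + 1)), (Rle_dec (a - 1) v), (Rle_dec v (b + 1));
    try (apply Hd; [lra | lra | apply Rabs_def1; lra]);
    rewrite !Z by lra; rewrite Rminus_0_r, Rabs_R0; apply cond_pos.
Qed.

Lemma derivable_of_cauchy_quotient f y :
  (forall eps, 0 < eps -> exists del, 0 < del /\ forall h h', h <> 0 -> h' <> 0 ->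
     Rabs h < del -> Rabs h' < del ->
     Rabs ((f (y + h) - f y) / h - (f (y + h') - f y) / h') < eps) ->
  exists l, derivable_pt_lim f y l.
Proof.
  intros C.
  assert (Hball : forall h d, ball 0 d h <-> Rabs h < d).
  { intros h d. unfold ball; cbn. unfold AbsRing_ball, abs, minus, plus, opp; cbn.
    now rewrite Ropp_0, Rplus_0_r. }
  destruct (proj1 (filterlim_locally_cauchy (F := Rbar_locally' (Finite 0))
                     (fun h => (f (y + h) - f y) / h))) as [l Hl].
  - intros eps. destruct (C eps (cond_pos eps)) as [del [Hdel Hc]].
    exists (fun h => Rabs h < del /\ h <> 0). split.
    + exists (mkposreal del Hdel). intros h Hh Hh0. now split; [apply Hball|].
    + intros u v [Hu Hu0] [Hv Hv0]. apply (Hc v u); auto.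
  - exists l. intros eps Heps.
    destruct (proj1 (filterlim_locally _ l) Hl (mkposreal eps Heps)) as [d Hd].
    exists d. intros h Hh0 Hh. now apply (Hd h); [apply Hball|].
Qed.

Lemma derivative_dist_le f y l m B : derivable_pt_lim f y l ->
  (forall rho, 0 < rho -> exists del, 0 < del /\ forall h, h <> 0 -> Rabs h < del ->
     Rabs ((f (y + h) - f y) / h - m) <= B + rho) ->
  Rabs (l - m) <= B.
Proof.
  intros D Q. apply Rle_plus_epsilon. intros eps Heps.
  destruct (Q (eps / 2)) as [d1 [Hd1 Hq]]; [lra|].
  destruct (D (eps / 2)) as [d2 Hd2]; [lra|].
  set (h := Rmin d1 d2 / 2).
  assert (Hm : 0 < Rmin d1 d2) by (apply Rmin_glb_lt; [lra | apply cond_pos]).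
  assert (Hh : Rabs h = h) by (apply Rabs_right; unfold h; lra).
  pose proof (Rmin_l d1 d2). pose proof (Rmin_r d1 d2).
  specialize (Hq h ltac:(unfold h; lra) ltac:(rewrite Hh; unfold h; lra)).
  specialize (Hd2 h ltac:(unfold h; lra) ltac:(rewrite Hh; unfold h; lra)).
  apply Rabs_def2 in Hd2. apply Rabs_le_between in Hq. apply Rabs_le. lra.
Qed.

Lemma derivable_pt_lim_glue f g1 g2 y l c d : c < y < d ->
  (forall z, c < z <= y -> f z = g1 z) -> (forall z, y <= z < d -> f z = g2 z) ->
  derivable_pt_lim g1 y l -> derivable_pt_lim g2 y l -> derivable_pt_lim f y l.
Proof.
  intros Hy E1 E2 D1 D2 eps Heps.
  destruct (D1 eps Heps) as [d1 Hd1]. destruct (D2 eps Heps) as [d2 Hd2].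
  assert (Hd : 0 < Rmin (Rmin d1 d2) (Rmin (y - c) (d - y))).
  { repeat apply Rmin_glb_lt; try apply cond_pos; lra. }
  exists (mkposreal _ Hd). intros h Hh0 Hh; cbn in Hh.
  pose proof (Rmin_l (Rmin d1 d2) (Rmin (y - c) (d - y))) as M1.
  pose proof (Rmin_r (Rmin d1 d2) (Rmin (y - c) (d - y))) as M2.
  pose proof (Rmin_l d1 d2). pose proof (Rmin_r d1 d2).
  pose proof (Rmin_l (y - c) (d - y)). pose proof (Rmin_r (y - c) (d - y)).
  pose proof (Rabs_def2 _ _ Hh).
  destruct (Rlt_or_le h 0).
  - rewrite !E1 by lra. apply Hd1; auto. lra.
  - rewrite !E2 by lra. apply Hd2; auto. lra.
Qed.

Lemma gronwall V V' al ga T : 0 <= al -> 0 <= ga -> 0 <= T ->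
  (forall u, 0 <= u <= T -> derivable_pt_lim V u (V' u)) ->
  (forall u, 0 <= u <= T -> V' u <= al * V u + ga) ->
  V T <= (V 0 + ga * T) * exp (al * T).
Proof.
  intros Hal Hga HT D B.
  assert (Hdec : V T * exp (- al * T) - ga * T <= V 0 * exp (- al * 0) - ga * 0).
  { apply (le_of_derivative_nonpos (fun u => V u * exp (- al * u) - ga * u)
      (fun u => V' u * exp (- al * u) + V u * (- al * exp (- al * u)) - ga * 1)); auto.
    - intros u Hu.
      apply (derivable_pt_lim_minus (fun u => V u * exp (- al * u)) (fun u => ga * u)).
      + apply (derivable_pt_lim_mult V (fun u => exp (- al * u))); [now apply D|].
        apply derivable_pt_lim_exp_lin.
      + apply (derivable_pt_lim_scal (fun u => u)), derivable_pt_lim_id.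
    - intros u Hu. assert (exp (- al * u) <= 1).
      { rewrite <- exp_0. destruct (Req_dec (al * u) 0) as [E|E].
        - rewrite Ropp_mult_distr_l_reverse, E, Ropp_0. lra.
        - left. apply exp_increasing. nra. }
      pose proof (exp_pos (- al * u)). specialize (B u Hu). nra. }
  rewrite Rmult_0_r, exp_0 in Hdec.
  assert (Hinv : exp (- al * T) * exp (al * T) = 1).
  { rewrite <- exp_plus, <- exp_0. f_equal. ring. }
  pose proof (exp_pos (al * T)).
  apply Rmult_le_compat_r with (r := exp (al * T)) in Hdec; [|lra].
  rewrite Rmult_minus_distr_r, Rmult_assoc, Hinv in Hdec. nra.
Qed.

Lemma planar_rate_le a b e1 e2 L r : 0 <= L ->
  Rabs e1 <= L * (Rabs a + Rabs b) + r -> Rabs e2 <= L * (Rabs a + Rabs b) + r ->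
  2 * a * e1 + 2 * b * e2 <= (4 * L + 2) * (a ^ 2 + b ^ 2) + r ^ 2.
Proof.
  intros HL B1 B2.
  assert (Ha : a * e1 <= Rabs a * Rabs e1) by (rewrite <- Rabs_mult; apply RRle_abs).
  assert (Hb : b * e2 <= Rabs b * Rabs e2) by (rewrite <- Rabs_mult; apply RRle_abs).
  rewrite <- (pow2_abs a), <- (pow2_abs b).
  pose proof (Rabs_pos a). pose proof (Rabs_pos b).
  assert (Rabs a * Rabs e1 <= Rabs a * (L * (Rabs a + Rabs b) + r))
    by (apply Rmult_le_compat_l; lra).
  assert (Rabs b * Rabs e2 <= Rabs b * (L * (Rabs a + Rabs b) + r))
    by (apply Rmult_le_compat_l; lra).
  assert (0 <= L * (Rabs a - Rabs b) ^ 2) by (apply Rmult_le_pos; [lra | apply pow2_ge_0]).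
  pose proof (pow2_ge_0 (r - (Rabs a + Rabs b))). pose proof (pow2_ge_0 (Rabs a - Rabs b)).
  nra.
Qed.

Lemma abs_le_of_sq_le p c : 0 <= c -> p ^ 2 <= c ^ 2 -> Rabs p <= c.
Proof. intros Hc H. apply Rabs_le. split; nra. Qed.

Lemma planar_gronwall p1 p2 d1 d2 L r M T : 0 <= L -> 0 <= r -> 0 <= M -> 0 <= T <= 1 ->
  (forall u, 0 <= u <= T -> derivable_pt_lim p1 u (d1 u) /\ derivable_pt_lim p2 u (d2 u)) ->
  (forall u, 0 <= u <= T -> Rabs (d1 u) <= L * (Rabs (p1 u) + Rabs (p2 u)) + r /\
                            Rabs (d2 u) <= L * (Rabs (p1 u) + Rabs (p2 u)) + r) ->
  p1 0 ^ 2 + p2 0 ^ 2 + r ^ 2 <= M ^ 2 ->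
  Rabs (p1 T) <= M * exp (2 * L + 1) /\ Rabs (p2 T) <= M * exp (2 * L + 1).
Proof.
  intros HL Hr HM HT D B H0.
  assert (Hsq : forall p d u, derivable_pt_lim p u (d u) ->
            derivable_pt_lim (fun u => p u ^ 2) u (2 * p u * d u)).
  { intros p d u Dp. apply (derivable_pt_lim_ext (fun u => p u * p u)); [intros; ring|].
    apply (derivable_pt_lim_val _ _ (d u * p u + p u * d u)); [|ring].
    now apply (derivable_pt_lim_mult p p). }
  assert (G : p1 T ^ 2 + p2 T ^ 2 <= (p1 0 ^ 2 + p2 0 ^ 2 + r ^ 2 * T) * exp ((4 * L + 2) * T)).
  { apply (gronwall (fun u => p1 u ^ 2 + p2 u ^ 2) (fun u => 2 * p1 u * d1 u + 2 * p2 u * d2 u));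
      try nra.
    - intros u Hu. destruct (D u Hu) as [D1 D2].
      apply (derivable_pt_lim_plus (fun u => p1 u ^ 2) (fun u => p2 u ^ 2)); now apply Hsq.
    - intros u Hu. destruct (B u Hu). now apply planar_rate_le. }
  set (e := exp (2 * L + 1)).
  assert (He : exp ((4 * L + 2) * T) <= e ^ 2).
  { replace (e ^ 2) with (exp ((2 * L + 1) + (2 * L + 1))) by (unfold e; rewrite exp_plus; ring).
    destruct (Req_dec T 1) as [->|]; [right; f_equal; ring | left; apply exp_increasing; nra]. }
  pose proof (exp_pos ((4 * L + 2) * T)). pose proof (exp_pos (2 * L + 1)).
  assert (p1 T ^ 2 + p2 T ^ 2 <= (M * e) ^ 2).
  { eapply Rle_trans; [apply G|]. rewrite Rpow_mult_distr.
    apply Rmult_le_compat; nra. }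
  split; apply abs_le_of_sq_le; try (unfold e; nra); nra.
Qed.

Lemma linear_rate_le a b f p q L r : Rabs a <= L -> Rabs b <= L -> Rabs f <= r ->
  Rabs (a * p + b * q + f) <= L * (Rabs p + Rabs q) + r.
Proof.
  intros Ha Hb Hf.
  assert (Rabs a * Rabs p <= L * Rabs p) by (apply Rmult_le_compat_r; [apply Rabs_pos | auto]).
  assert (Rabs b * Rabs q <= L * Rabs q) by (apply Rmult_le_compat_r; [apply Rabs_pos | auto]).
  pose proof (Rabs_triang (a * p + b * q) f). pose proof (Rabs_triang (a * p) (b * q)).
  rewrite !Rabs_mult in *. lra.
Qed.

Lemma derivable_pt_lim_RInt al u : (forall v, continuity_pt al v) ->
  derivable_pt_lim (fun v => RInt al 0 v) u (al u).
Proof.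
  intros C. apply is_derive_Reals, (is_derive_RInt al _ 0).
  - apply filter_forall. intros v. apply (@RInt_correct R_CompleteNormedModule).
    apply (@ex_RInt_continuous R_CompleteNormedModule).
    intros z _. apply continuity_pt_filterlim, C.
  - apply continuity_pt_filterlim, C.
Qed.

Lemma nonneg_of_linear_ode f al g T : 0 <= T -> (forall u, continuity_pt al u) ->
  (forall u, 0 <= u <= T -> derivable_pt_lim f u (al u * f u + g u)) ->
  (forall u, 0 <= u <= T -> 0 <= g u) -> 0 <= f 0 -> 0 <= f T.
Proof.
  intros HT C D Hg H0.
  set (A := fun v => - RInt al 0 v).
  assert (Hdec : - (f T * exp (A T)) <= - (f 0 * exp (A 0))).
  { apply (le_of_derivative_nonpos (fun u => - (f u * exp (A u)))
      (fun u => - ((al u * f u + g u) * exp (A u) + f u * (exp (A u) * - al u)))); auto.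
    - intros u Hu. apply (derivable_pt_lim_opp (fun u => f u * exp (A u))).
      apply (derivable_pt_lim_mult f (fun u => exp (A u))); [now apply D|].
      apply (derivable_pt_lim_comp A exp); [|apply derivable_pt_lim_exp].
      apply (derivable_pt_lim_opp (fun v => RInt al 0 v)). now apply derivable_pt_lim_RInt.
    - intros u Hu. pose proof (exp_pos (A u)). specialize (Hg u Hu). nra. }
  assert (A0 : A 0 = 0) by (unfold A; rewrite RInt_point; apply Ropp_0).
  rewrite A0, exp_0 in Hdec. pose proof (exp_pos (A T)). nra.
Qed.

Lemma neg_of_no_root g T : continuity g -> g 0 < 0 ->
  (forall u, 0 <= u <= T -> g u <> 0) -> forall u, 0 <= u <= T -> g u < 0.
Proof.
  intros C g0 Nz u Hu. destruct (Rlt_or_le (g u) 0) as [|Hge]; auto. exfalso.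
  assert (0 < u) by (destruct (Req_dec u 0) as [->|]; lra).
  assert (0 < g u) by (specialize (Nz u Hu); lra).
  destruct (IVT g 0 u C ltac:(lra) g0 ltac:(lra)) as [z [Hz Gz]].
  apply (Nz z); [lra | auto].
Qed.

Lemma peval_pderiv_aux_S k l x :
  peval (pderiv_aux (S k) l) x = peval (pderiv_aux k l) x + peval l x.
Proof.
  unfold peval. revert k. induction l as [|h t IH]; intros k; cbn [pderiv_aux fold_right]; [ring|].
  rewrite IH, S_INR. ring.
Qed.

Lemma peval_pderiv_cons h t x : peval (pderiv (h :: t)) x = peval t x + x * peval (pderiv t) x.
Proof.
  destruct t as [|h' t']; cbn; [ring|].
  pose proof (peval_pderiv_aux_S 1 t' x) as E. unfold peval in E. rewrite E. ring.
Qed.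

Lemma peval_derivable c x : derivable_pt_lim (peval c) x (peval (pderiv c) x).
Proof.
  induction c as [|h t IH].
  - apply derivable_pt_lim_const.
  - rewrite peval_pderiv_cons.
    apply (derivable_pt_lim_val _ _ (0 + (1 * peval t x + x * peval (pderiv t) x))); [|ring].
    apply (derivable_pt_lim_plus (fun _ => h) (fun y => y * peval t y)).
    + apply derivable_pt_lim_const.
    + apply (derivable_pt_lim_mult (fun y => y) (peval t)); [apply derivable_pt_lim_id | exact IH].
Qed.

Lemma ext_zero_in p a b y : a <= y <= b -> ext_zero p a b y = p y.
Proof.
  intros Hy. unfold ext_zero. destruct (Rle_dec a y); [|lra]. destruct (Rle_dec y b); [easy | lra].
Qed.

Lemma ext_zero_out p a b y : y < a \/ b < y -> ext_zero p a b y = 0.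
Proof.
  intros Hy. unfold ext_zero. destruct (Rle_dec a y); [|easy]. destruct (Rle_dec y b); [lra | easy].
Qed.

Lemma ext_zero_derivable p p' a b : a < b -> (forall y, derivable_pt_lim p y (p' y)) ->
  p a = 0 -> p b = 0 -> p' a = 0 -> p' b = 0 ->
  forall y, derivable_pt_lim (ext_zero p a b) y (ext_zero p' a b y).
Proof.
  intros Hab D pa pb p'a p'b y.
  assert (D0 : derivable_pt_lim (fun _ => 0) y 0) by apply derivable_pt_lim_const.
  destruct (Rtotal_order y a) as [Hya|[->|Hay]]; [|rewrite ext_zero_in, p'a by lra|].
  - rewrite ext_zero_out by lra.
    apply (derivable_pt_lim_glue _ (fun _ => 0) (fun _ => 0) _ _ (y - 1) a); auto; try lra;
      intros; apply ext_zero_out; lra.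
  - apply (derivable_pt_lim_glue _ (fun _ => 0) p _ _ (a - 1) b); try lra.
    + intros z Hz. destruct (Req_dec z a) as [->|]; [now rewrite ext_zero_in by lra|].
      apply ext_zero_out. lra.
    + intros. apply ext_zero_in. lra.
    + apply derivable_pt_lim_const.
    + rewrite <- p'a. apply D.
  - destruct (Rtotal_order y b) as [Hyb|[->|Hby]]; [|rewrite ext_zero_in, p'b by lra|].
    + rewrite ext_zero_in by lra.
      apply (derivable_pt_lim_glue _ p p _ _ a b); auto; try lra;
        intros; apply ext_zero_in; lra.
    + apply (derivable_pt_lim_glue _ p (fun _ => 0) _ _ a (b + 1)); try lra.
      * intros. apply ext_zero_in. lra.
      * intros z Hz. destruct (Req_dec z b) as [->|]; [now rewrite ext_zero_in by lra|].
        apply ext_zero_out. lra.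
      * rewrite <- p'b. apply D.
      * apply derivable_pt_lim_const.
    + rewrite ext_zero_out by lra.
      apply (derivable_pt_lim_glue _ (fun _ => 0) (fun _ => 0) _ _ b (y + 1)); auto; try lra;
        intros; apply ext_zero_out; lra.
Qed.

Lemma ext_zero_abs_le p a b N y : 0 <= N ->
  (forall z, a <= z <= b -> Rabs (p z) <= N) -> Rabs (ext_zero p a b y) <= N.
Proof.
  intros HN H. destruct (Rle_dec a y), (Rle_dec y b).
  - rewrite ext_zero_in by lra. apply H. lra.
  all: rewrite ext_zero_out by lra; rewrite Rabs_R0; lra.
Qed.

Lemma mult_ext_zero_abs_le f p a b M N y : 0 <= M -> 0 <= N ->
  (forall z, a <= z <= b -> Rabs (f z) <= M) -> (forall z, a <= z <= b -> Rabs (p z) <= N) ->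
  Rabs (f y * ext_zero p a b y) <= M * N.
Proof.
  intros HM HN Hf Hp. rewrite Rabs_mult. destruct (Rle_dec a y), (Rle_dec y b).
  - rewrite ext_zero_in by lra.
    apply Rmult_le_compat; try apply Rabs_pos; [apply Hf | apply Hp]; lra.
  all: rewrite ext_zero_out by lra; rewrite Rabs_R0, Rmult_0_r; nra.
Qed.

Lemma is_sup_norm_on_abs_le fs a b N f z :
  is_sup_norm_on fs a b N -> In f fs -> a <= z <= b -> Rabs (f z) <= N.
Proof. intros [Hub _] Hf Hz. apply Hub. now exists f, z. Qed.

Section FirstCrossing.

Variables (w w1 phi ph1 X E : R -> R) (s : R).
Hypothesis Dw : forall y, derivable_pt_lim w y (w1 y).
Hypothesis Cw1 : forall y, continuity_pt w1 y.
Hypothesis Dphi : forall y, derivable_pt_lim phi y (ph1 y).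
Hypothesis Cph1 : forall y, continuity_pt ph1 y.
Hypothesis DX : forall t,
  derivable_pt_lim X t (- w1 (X t) * phi (X t) - (E t - w (X t)) * ph1 (X t)).
Hypothesis DE : forall t, derivable_pt_lim E t (phi (X t)).

Let X' t := - w1 (X t) * phi (X t) - (E t - w (X t)) * ph1 (X t).

Lemma continuity_pt_along_X f :
  (forall y, continuity_pt f y) -> forall t, continuity_pt (fun t => f (X t)) t.
Proof.
  intros Cf t. apply (continuity_pt_comp X f).
  - eapply derivable_continuous_pt. exists (X' t). apply DX.
  - apply Cf.
Qed.

Lemma phi_X_derivable t : derivable_pt_lim (fun t => phi (X t)) t (ph1 (X t) * X' t).
Proof. apply (derivable_pt_lim_comp X phi); [apply DX | apply Dphi]. Qed.

Lemma height_derivable t :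
  derivable_pt_lim (fun t => E t - w (X t)) t (phi (X t) - w1 (X t) * X' t).
Proof.
  apply (derivable_pt_lim_minus E (fun t => w (X t))); [apply DE|].
  apply (derivable_pt_lim_comp X w); [apply DX | apply Dw].
Qed.

(* While [sg * (E - w(X) - s phi(X))] is negative, the weight [sg * phi(X)] solves a linear
   equation with a nonnegative source term. *)
Lemma crossing_weight_nonneg sg T : 0 <= T ->
  (forall u, 0 <= u <= T -> sg * (E u - w (X u) - s * phi (X u)) < 0) ->
  0 <= sg * phi (X 0) -> 0 <= sg * phi (X T).
Proof.
  intros HT Hneg H0.
  apply (nonneg_of_linear_ode (fun u => sg * phi (X u))
           (fun u => - ph1 (X u) * (w1 (X u) + s * ph1 (X u)))
           (fun u => - (sg * (E u - w (X u) - s * phi (X u))) * ph1 (X u) ^ 2)); auto.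
  - intros u. apply continuity_pt_mult; [apply continuity_pt_opp|apply continuity_pt_plus];
      [| | apply continuity_pt_mult; [apply continuity_pt_const; now intros ? ?|]];
      now apply continuity_pt_along_X.
  - intros u _. apply (derivable_pt_lim_val _ _ (sg * (ph1 (X u) * X' u))).
    + apply (derivable_pt_lim_scal (fun u => phi (X u))), phi_X_derivable.
    + unfold X'. ring.
  - intros u Hu. specialize (Hneg u Hu). pose proof (pow2_ge_0 (ph1 (X u))). nra.
Qed.

Lemma crossing_level_nonneg sg T : 0 <= T -> E 0 = w (X 0) ->
  (forall u, 0 <= u <= T -> 0 <= sg * phi (X u)) ->
  0 <= sg * (E T - w (X T) - T * phi (X T)).
Proof.
  intros HT E0 Hm.
  apply (nonneg_of_linear_ode (fun u => sg * (E u - w (X u) - u * phi (X u)))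
           (fun u => ph1 (X u) * (w1 (X u) + u * ph1 (X u)))
           (fun u => sg * phi (X u) * (w1 (X u) + u * ph1 (X u)) ^ 2)); auto.
  - intros u. apply continuity_pt_mult; [|apply continuity_pt_plus];
      [| |apply continuity_pt_mult; [apply derivable_continuous_pt, derivable_pt_id|]];
      now apply continuity_pt_along_X.
  - intros u _.
    apply (derivable_pt_lim_val _ _
             (sg * ((phi (X u) - w1 (X u) * X' u) - (1 * phi (X u) + u * (ph1 (X u) * X' u))))).
    + apply (derivable_pt_lim_scal (fun u => E u - w (X u) - u * phi (X u))).
      apply (derivable_pt_lim_minus (fun u => E u - w (X u)) (fun u => u * phi (X u))).
      * apply height_derivable.
      * apply (derivable_pt_lim_mult (fun u => u) (fun u => phi (X u))).
        -- apply derivable_pt_lim_id.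
        -- apply phi_X_derivable.
    + unfold X'. ring.
  - intros u Hu. specialize (Hm u Hu). pose proof (pow2_ge_0 (w1 (X u) + u * ph1 (X u))). nra.
  - rewrite E0. lra.
Qed.

Lemma first_crossing_le t0 : E 0 = w (X 0) -> 0 < s -> phi (X 0) <> 0 ->
  (forall u, 0 <= u < t0 -> E u <> w (X u) + s * phi (X u)) -> t0 <= s.
Proof.
  intros E0 Hs Hp0 Hfirst.
  destruct (Rle_or_lt t0 s) as [|Hlt]; auto. exfalso.
  assert (Hsg : exists sg, sg <> 0 /\ 0 < sg * phi (X 0)).
  { destruct (Rlt_or_le 0 (phi (X 0))); [exists 1 | exists (-1)]; split; lra. }
  destruct Hsg as [sg [Hsg0 Hsg]].
  assert (Cphi : forall y, continuity_pt phi y)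
    by (intros y; apply derivable_continuous_pt; exists (ph1 y); apply Dphi).
  assert (Cw : forall y, continuity_pt w y)
    by (intros y; apply derivable_continuous_pt; exists (w1 y); apply Dw).
  assert (Hneg : forall u, 0 <= u <= s -> sg * (E u - w (X u) - s * phi (X u)) < 0).
  { apply (neg_of_no_root (fun u => sg * (E u - w (X u) - s * phi (X u)))).
    - intros u. apply continuity_pt_mult; [apply continuity_pt_const; now intros ? ?|].
      apply continuity_pt_minus; [apply continuity_pt_minus|apply continuity_pt_mult];
        [| |apply continuity_pt_const; now intros ? ?|]; try now apply continuity_pt_along_X.
      apply derivable_continuous_pt. exists (phi (X u)). apply DE.
    - rewrite E0. nra.
    - intros u Hu Z. apply (Hfirst u); [lra|].
      apply Rmult_integral in Z as [Z|Z]; [contradiction | lra]. }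
  assert (Hm : forall u, 0 <= u <= s -> 0 <= sg * phi (X u)).
  { intros u Hu. apply (crossing_weight_nonneg sg u); [lra | | lra].
    intros v Hv. apply Hneg. lra. }
  pose proof (crossing_level_nonneg sg s ltac:(lra) E0 Hm).
  specialize (Hneg s ltac:(lra)). lra.
Qed.

End FirstCrossing.

Section Variational.

Variables (w w1 G G' phi ph1 ph2 : R -> R) (xi eta : R -> R -> R) (x T Nw Nphi : R).
Hypothesis Dw : forall y, derivable_pt_lim w y (w1 y).
Hypothesis DG : forall y, derivable_pt_lim G y (G' y).
Hypothesis Dphi : forall y, derivable_pt_lim phi y (ph1 y).
Hypothesis Dph1 : forall y, derivable_pt_lim ph1 y (ph2 y).
Hypothesis UG' : unif_continuous G'.
Hypothesis Uph1 : unif_continuous ph1.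
Hypothesis Uph2 : unif_continuous ph2.
Hypothesis BG' : forall y, Rabs (G' y) <= 2 * Nw * Nphi.
Hypothesis Bphi : forall y, Rabs (phi y) <= Nphi.
Hypothesis Bph1 : forall y, Rabs (ph1 y) <= Nphi.
Hypothesis Bph2 : forall y, Rabs (ph2 y) <= Nphi.
Hypothesis HNphi : 0 <= Nphi < 1.
Hypothesis HNw : 0 <= Nw.
Hypothesis Bwx : Rabs (w x) <= Nw.
Hypothesis Bw1x : Rabs (w1 x) <= Nw.
Hypothesis DX : forall y u,
  derivable_pt_lim (fun v => xi v y) u (G (xi u y) - eta u y * ph1 (xi u y)).
Hypothesis DE : forall y u, derivable_pt_lim (fun v => eta v y) u (phi (xi u y)).
Hypothesis I0 : forall y, xi 0 y = y /\ eta 0 y = w y.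
Hypothesis HT : 0 <= T <= 1.

Let L := 3 * Nw + 2.
Let K := (Nw + 2) * exp (2 * L + 1).

Lemma eta_abs_le u : 0 <= u <= T -> Rabs (eta u x) <= Nw + 1.
Proof.
  intros Hu.
  assert (Hl := lipschitz_of_derivative_bound (fun v => eta v x) (fun v => phi (xi v x)) 1
                  (DE x) ltac:(intros y; specialize (Bphi (xi y x)); lra) u 0).
  destruct (I0 x) as [_ E0]. cbv beta in Hl. rewrite E0, Rminus_0_r, (Rabs_right u) in Hl by lra.
  pose proof (Rabs_triang_inv (eta u x) (w x)). lra.
Qed.

Lemma field_lipschitz u a e : 0 <= u <= T ->
  Rabs ((G a - e * ph1 a) - (G (xi u x) - eta u x * ph1 (xi u x))) <=
  L * (Rabs (a - xi u x) + Rabs (e - eta u x)).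
Proof.
  intros Hu.
  replace ((G a - e * ph1 a) - (G (xi u x) - eta u x * ph1 (xi u x))) with
    ((G a - G (xi u x)) + (- ph1 a) * (e - eta u x) + (- eta u x) * (ph1 a - ph1 (xi u x))) by ring.
  pose proof (lipschitz_of_derivative_bound G G' _ DG BG' a (xi u x)).
  pose proof (lipschitz_of_derivative_bound ph1 ph2 _ Dph1 Bph2 a (xi u x)).
  assert (Rabs ((- eta u x) * (ph1 a - ph1 (xi u x))) <= (Nw + 1) * (Nphi * Rabs (a - xi u x))).
  { rewrite Rabs_mult, Rabs_Ropp. apply Rmult_le_compat; try apply Rabs_pos; auto.
    now apply eta_abs_le. }
  assert (Rabs ((- ph1 a) * (e - eta u x)) <= Nphi * Rabs (e - eta u x)).
  { rewrite Rabs_mult, Rabs_Ropp. apply Rmult_le_compat_r; [apply Rabs_pos | auto]. }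
  pose proof (Rabs_triang (G a - G (xi u x) + - ph1 a * (e - eta u x))
                          (- eta u x * (ph1 a - ph1 (xi u x)))).
  pose proof (Rabs_triang (G a - G (xi u x)) (- ph1 a * (e - eta u x))).
  pose proof (Rabs_pos (a - xi u x)). pose proof (Rabs_pos (e - eta u x)). destruct HNphi.
  assert (2 * Nw * Nphi * Rabs (a - xi u x) <= 2 * Nw * Rabs (a - xi u x))
    by (apply Rmult_le_compat_r; nra).
  assert ((Nw + 1) * (Nphi * Rabs (a - xi u x)) <= (Nw + 1) * Rabs (a - xi u x))
    by (apply Rmult_le_compat_l; nra).
  assert (Nphi * Rabs (e - eta u x) <= Rabs (e - eta u x)) by nra.
  assert (0 <= Nw * Rabs (e - eta u x)) by nra.
  unfold L. lra.
Qed.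

Lemma w_increment_le : exists d, 0 < d /\ forall h, Rabs h < d ->
  Rabs (w (x + h) - w x) <= (Nw + 1) * Rabs h.
Proof.
  destruct (Dw x 1 ltac:(lra)) as [d Hd]. exists d. split; [apply cond_pos|]. intros h Hh.
  destruct (Req_dec h 0) as [->|Hh0].
  - rewrite Rplus_0_r, Rminus_diag, !Rabs_R0. lra.
  - specialize (Hd h Hh0 Hh).
    replace (w (x + h) - w x) with ((w (x + h) - w x) / h * h) by (field; auto).
    rewrite Rabs_mult. apply Rmult_le_compat_r; [apply Rabs_pos|].
    pose proof (Rabs_triang_inv ((w (x + h) - w x) / h) (w1 x)). lra.
Qed.

Lemma flow_lipschitz : exists d, 0 < d /\ forall h, Rabs h < d -> forall u, 0 <= u <= T ->
  Rabs (xi u (x + h) - xi u x) <= K * Rabs h /\ Rabs (eta u (x + h) - eta u x) <= K * Rabs h.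
Proof.
  destruct w_increment_le as [d [Hd Hw]]. exists d. split; [exact Hd|]. intros h Hh u Hu.
  pose proof (Rabs_pos h).
  replace (K * Rabs h) with ((Nw + 2) * Rabs h * exp (2 * L + 1)) by (unfold K; ring).
  apply (planar_gronwall (fun v => xi v (x + h) - xi v x) (fun v => eta v (x + h) - eta v x)
    (fun v => (G (xi v (x + h)) - eta v (x + h) * ph1 (xi v (x + h)))
              - (G (xi v x) - eta v x * ph1 (xi v x)))
    (fun v => phi (xi v (x + h)) - phi (xi v x)) L 0); try (unfold L; nra); try lra.
  - intros v _. split.
    + apply (derivable_pt_lim_minus (fun v => xi v (x + h)) (fun v => xi v x)); apply DX.
    + apply (derivable_pt_lim_minus (fun v => eta v (x + h)) (fun v => eta v x)); apply DE.
  - intros v Hv. rewrite Rplus_0_r. split; [apply field_lipschitz; lra|].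
    pose proof (lipschitz_of_derivative_bound phi ph1 _ Dphi Bph1 (xi v (x + h)) (xi v x)).
    pose proof (Rabs_pos (xi v (x + h) - xi v x)). pose proof (Rabs_pos (eta v (x + h) - eta v x)).
    destruct HNphi. unfold L. nra.
  - destruct (I0 (x + h)) as [-> ->], (I0 x) as [-> ->].
    replace (x + h - x) with h by ring. specialize (Hw h Hh).
    rewrite <- (pow2_abs h). rewrite <- (pow2_abs (w (x + h) - w x)).
    pose proof (Rabs_pos (w (x + h) - w x)). nra.
Qed.

(* [Q1], [Q2] are the difference quotients in x, [[a11 a12; a21 0]] is the Jacobian of the
   vector field along the trajectory of [x], and [R1], [R2] are the linearization errors. *)
Let Q1 h u := (xi u (x + h) - xi u x) / h.
Let Q2 h u := (eta u (x + h) - eta u x) / h.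
Let a11 u := G' (xi u x) - eta u x * ph2 (xi u x).
Let a12 u := - ph1 (xi u x).
Let a21 u := ph1 (xi u x).
Let R1 h u := (G (xi u (x + h)) - eta u (x + h) * ph1 (xi u (x + h)))
  - (G (xi u x) - eta u x * ph1 (xi u x))
  - a11 u * (xi u (x + h) - xi u x) - a12 u * (eta u (x + h) - eta u x).
Let R2 h u := phi (xi u (x + h)) - phi (xi u x) - a21 u * (xi u (x + h) - xi u x).

Lemma coefficients_abs_le u : 0 <= u <= T ->
  Rabs (a11 u) <= (3 * Nw + 1) * Nphi /\ Rabs (a12 u) <= Nphi /\ Rabs (a21 u) <= Nphi.
Proof.
  intros Hu. unfold a11, a12, a21. rewrite Rabs_Ropp. split; [|auto]. unfold Rminus.
  pose proof (Rabs_triang (G' (xi u x)) (- (eta u x * ph2 (xi u x)))).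
  rewrite Rabs_Ropp, Rabs_mult in *.
  assert (Rabs (eta u x) * Rabs (ph2 (xi u x)) <= (Nw + 1) * Nphi)
    by (apply Rmult_le_compat; try apply Rabs_pos; auto; now apply eta_abs_le).
  specialize (BG' (xi u x)). lra.
Qed.

Lemma coefficients_abs_le_L u : 0 <= u <= T ->
  Rabs (a11 u) <= L /\ Rabs (a12 u) <= L /\ Rabs (a21 u) <= L.
Proof.
  intros Hu. destruct (coefficients_abs_le u Hu) as [? [? ?]]. destruct HNphi.
  unfold L. repeat split; nra.
Qed.

Lemma quotients_at_0 h : h <> 0 -> Q1 h 0 = 1 /\ Q2 h 0 = (w (x + h) - w x) / h.
Proof.
  intros Hh. unfold Q1, Q2. destruct (I0 (x + h)) as [-> ->], (I0 x) as [-> ->].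
  split; [field|]; auto.
Qed.

Lemma quotient_derivable h u : h <> 0 ->
  derivable_pt_lim (fun v => Q1 h v) u (a11 u * Q1 h u + a12 u * Q2 h u + R1 h u / h) /\
  derivable_pt_lim (fun v => Q2 h v) u (a21 u * Q1 h u + R2 h u / h).
Proof.
  intros Hh. split.
  - apply (derivable_pt_lim_val _ _
      (((G (xi u (x + h)) - eta u (x + h) * ph1 (xi u (x + h)))
        - (G (xi u x) - eta u x * ph1 (xi u x))) / h)).
    + apply (derivable_pt_lim_div_const (fun v => xi v (x + h) - xi v x)).
      apply (derivable_pt_lim_minus (fun v => xi v (x + h)) (fun v => xi v x)); apply DX.
    + unfold Q1, Q2, R1. field. exact Hh.
  - apply (derivable_pt_lim_val _ _ ((phi (xi u (x + h)) - phi (xi u x)) / h)).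
    + apply (derivable_pt_lim_div_const (fun v => eta v (x + h) - eta v x)).
      apply (derivable_pt_lim_minus (fun v => eta v (x + h)) (fun v => eta v x)); apply DE.
    + unfold Q1, R2. field. exact Hh.
Qed.

Lemma remainder1_abs_le h u e : 0 <= u <= T ->
  Rabs (G (xi u (x + h)) - G (xi u x) - G' (xi u x) * (xi u (x + h) - xi u x))
    <= e * Rabs (xi u (x + h) - xi u x) ->
  Rabs (ph1 (xi u (x + h)) - ph1 (xi u x) - ph2 (xi u x) * (xi u (x + h) - xi u x))
    <= e * Rabs (xi u (x + h) - xi u x) ->
  Rabs (ph1 (xi u (x + h)) - ph1 (xi u x)) <= e ->
  Rabs (R1 h u) <= (Nw + 2) * e * Rabs (xi u (x + h) - xi u x)
                   + e * Rabs (eta u (x + h) - eta u x).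
Proof.
  intros Hu TG Tph1 Uph1'.
  set (dX := xi u (x + h) - xi u x) in *. set (dE := eta u (x + h) - eta u x).
  replace (R1 h u) with
    ((G (xi u (x + h)) - G (xi u x) - G' (xi u x) * dX)
     - eta u x * (ph1 (xi u (x + h)) - ph1 (xi u x) - ph2 (xi u x) * dX)
     - dE * (ph1 (xi u (x + h)) - ph1 (xi u x)))
    by (unfold R1, a11, a12, dX, dE; ring).
  pose proof (Rabs_pos dX). pose proof (Rabs_pos dE). pose proof (Rabs_pos (eta u x)).
  pose proof (eta_abs_le u Hu).
  unfold Rminus at 1 2. eapply Rle_trans; [apply Rabs_triang|].
  eapply Rle_trans; [apply Rplus_le_compat_r, Rabs_triang|]. rewrite !Rabs_Ropp, !Rabs_mult.
  assert (Rabs (eta u x) * Rabs (ph1 (xi u (x + h)) - ph1 (xi u x) - ph2 (xi u x) * dX)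
          <= (Nw + 1) * (e * Rabs dX)) by (apply Rmult_le_compat; auto; apply Rabs_pos).
  assert (Rabs dE * Rabs (ph1 (xi u (x + h)) - ph1 (xi u x)) <= Rabs dE * e)
    by (apply Rmult_le_compat_l; auto).
  lra.
Qed.

Lemma remainders_small rho : 0 < rho -> exists del, 0 < del /\ forall h, h <> 0 -> Rabs h < del ->
  forall u, 0 <= u <= T -> Rabs (R1 h u / h) <= rho /\ Rabs (R2 h u / h) <= rho.
Proof.
  intros Hrho.
  assert (HK : 0 < K) by (unfold K; pose proof (exp_pos (2 * L + 1)); nra).
  set (e := rho / ((Nw + 3) * K)).
  assert (He : 0 < e) by (unfold e; apply Rdiv_lt_0_compat; nra).
  destruct (taylor_remainder_unif G G' DG UG' e He) as [dG [HdG TG]].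
  destruct (taylor_remainder_unif ph1 ph2 Dph1 Uph2 e He) as [d1 [Hd1 T1]].
  destruct (taylor_remainder_unif phi ph1 Dphi Uph1 e He) as [dp [Hdp Tp]].
  destruct (Uph1 (mkposreal e He)) as [[dU HdU] U1].
  destruct flow_lipschitz as [dL [HdL Lip]].
  set (d := Rmin (Rmin dG d1) (Rmin dp dU)).
  assert (Hd : 0 < d) by (unfold d; repeat apply Rmin_glb_lt; auto).
  exists (Rmin dL (d / K)). split; [apply Rmin_glb_lt; [auto | apply Rdiv_lt_0_compat; auto]|].
  intros h Hh0 Hh u Hu.
  pose proof (Rmin_l dL (d / K)). pose proof (Rmin_r dL (d / K)).
  destruct (Lip h ltac:(lra) u Hu) as [LX LE].
  assert (Hsmall : Rabs (xi u (x + h) - xi u x) < d).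
  { apply (Rle_lt_trans _ (K * Rabs h)); [auto|].
    apply (Rmult_lt_reg_l (/ K)); [now apply Rinv_0_lt_compat|].
    rewrite <- Rmult_assoc, Rinv_l, Rmult_1_l by lra. unfold Rdiv in *. lra. }
  assert (d <= dG /\ d <= d1 /\ d <= dp /\ d <= dU).
  { unfold d. pose proof (Rmin_l (Rmin dG d1) (Rmin dp dU)).
    pose proof (Rmin_r (Rmin dG d1) (Rmin dp dU)).
    pose proof (Rmin_l dG d1). pose proof (Rmin_r dG d1). pose proof (Rmin_l dp dU).
    pose proof (Rmin_r dp dU). lra. }
  assert (HeK : (Nw + 3) * e * (K * Rabs h) = rho * Rabs h) by (unfold e; field; lra).
  pose proof (Rabs_pos h). pose proof (Rabs_pos (xi u (x + h) - xi u x)).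
  split; apply abs_div_le; auto.
  - eapply Rle_trans.
    + apply remainder1_abs_le;
        [auto | apply TG; lra | apply T1; lra | left; apply U1; auto; cbn; lra].
    + assert (e * Rabs (xi u (x + h) - xi u x) <= e * (K * Rabs h))
        by (apply Rmult_le_compat_l; lra).
      assert (e * Rabs (eta u (x + h) - eta u x) <= e * (K * Rabs h))
        by (apply Rmult_le_compat_l; lra).
      nra.
  - eapply Rle_trans; [apply Tp; lra|].
    assert (e * Rabs (xi u (x + h) - xi u x) <= e * (K * Rabs h)) by (apply Rmult_le_compat_l; lra).
    assert (0 <= e * (K * Rabs h)) by (apply Rmult_le_pos; [|apply Rmult_le_pos]; lra).
    nra.
Qed.

Lemma quotient_cauchy eps : 0 < eps -> exists del, 0 < del /\ forall h h', h <> 0 -> h' <> 0 ->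
  Rabs h < del -> Rabs h' < del ->
  Rabs (Q1 h T - Q1 h' T) < eps /\ Rabs (Q2 h T - Q2 h' T) < eps.
Proof.
  intros Heps. pose proof (exp_pos (2 * L + 1)).
  set (rho := eps / (4 * exp (2 * L + 1))).
  assert (Hrho : 0 < rho) by (unfold rho; apply Rdiv_lt_0_compat; lra).
  assert (Hfin : 3 * rho * exp (2 * L + 1) < eps) by (unfold rho; field_simplify; lra).
  destruct (remainders_small rho Hrho) as [dR [HdR HR]].
  destruct (Dw x rho Hrho) as [[dw Hdw] Hw]; cbn in Hw.
  exists (Rmin dR dw). split; [now apply Rmin_glb_lt|].
  intros h h' Hh0 Hh'0 Hh Hh'.
  pose proof (Rmin_l dR dw). pose proof (Rmin_r dR dw).
  enough (Rabs (Q1 h T - Q1 h' T) <= 3 * rho * exp (2 * L + 1) /\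
          Rabs (Q2 h T - Q2 h' T) <= 3 * rho * exp (2 * L + 1)) by lra.
  apply (planar_gronwall (fun v => Q1 h v - Q1 h' v) (fun v => Q2 h v - Q2 h' v)
     (fun v => a11 v * (Q1 h v - Q1 h' v) + a12 v * (Q2 h v - Q2 h' v)
               + (R1 h v / h - R1 h' v / h'))
     (fun v => a21 v * (Q1 h v - Q1 h' v) + 0 * (Q2 h v - Q2 h' v) + (R2 h v / h - R2 h' v / h'))
     L (rho + rho)); try (unfold L; lra).
  - intros v _. destruct (quotient_derivable h v Hh0) as [D1 D2].
    destruct (quotient_derivable h' v Hh'0) as [D1' D2']. split.
    + eapply derivable_pt_lim_val; [apply (derivable_pt_lim_minus _ _ _ _ _ D1 D1') | ring].
    + eapply derivable_pt_lim_val; [apply (derivable_pt_lim_minus _ _ _ _ _ D2 D2') | ring].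
  - intros v Hv. destruct (coefficients_abs_le_L v Hv) as [? [? ?]].
    destruct (HR h Hh0 ltac:(lra) v Hv), (HR h' Hh'0 ltac:(lra) v Hv).
    split; apply linear_rate_le; auto; try apply abs_sub_le; auto.
    rewrite Rabs_R0. unfold L. lra.
  - destruct (quotients_at_0 h Hh0) as [-> ->], (quotients_at_0 h' Hh'0) as [-> ->].
    assert (Hqw : Rabs ((w (x + h) - w x) / h - (w (x + h') - w x) / h') <= rho + rho).
    { replace ((w (x + h) - w x) / h - (w (x + h') - w x) / h')
        with (((w (x + h) - w x) / h - w1 x) - ((w (x + h') - w x) / h' - w1 x)) by ring.
      apply abs_sub_le; left; apply Hw; auto; lra. }
    rewrite <- (pow2_abs ((w (x + h) - w x) / h - (w (x + h') - w x) / h')).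
    pose proof (Rabs_pos ((w (x + h) - w x) / h - (w (x + h') - w x) / h')). nra.
Qed.

Lemma quotient_near_linearization rho : 0 < rho -> exists del, 0 < del /\ forall h, h <> 0 ->
  Rabs h < del ->
  Rabs (Q1 h T - 1) <= (4 * Nw + 3) * Nphi * exp (2 * L + 1) + rho /\
  Rabs (Q2 h T - w1 x) <= (4 * Nw + 3) * Nphi * exp (2 * L + 1) + rho.
Proof.
  intros Hrho. pose proof (exp_pos (2 * L + 1)). destruct HNphi.
  set (c0 := (4 * Nw + 3) * Nphi).
  set (rho' := rho / (exp (2 * L + 1) + 1)).
  assert (Hrho' : 0 < rho') by (unfold rho'; apply Rdiv_lt_0_compat; lra).
  assert (Hsplit : (c0 + rho') * exp (2 * L + 1) + rho' = c0 * exp (2 * L + 1) + rho)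
    by (unfold rho'; field; lra).
  destruct (remainders_small rho' Hrho') as [dR [HdR HR]].
  destruct (Dw x (Rmin rho' 1) ltac:(apply Rmin_glb_lt; lra)) as [[dw Hdw] Hw]. cbn in Hw.
  exists (Rmin dR dw). split; [now apply Rmin_glb_lt|]. intros h Hh0 Hh.
  pose proof (Rmin_l dR dw). pose proof (Rmin_r dR dw).
  set (qw := (w (x + h) - w x) / h).
  assert (Hqw : Rabs (qw - w1 x) < Rmin rho' 1) by (apply Hw; auto; lra).
  pose proof (Rmin_l rho' 1). pose proof (Rmin_r rho' 1).
  assert (Hqw' : Rabs qw <= Nw + 1)
    by (pose proof (Rabs_triang_inv qw (w1 x)); lra).
  enough (Rabs (Q1 h T - 1) <= (c0 + rho') * exp (2 * L + 1) /\
          Rabs (Q2 h T - qw) <= (c0 + rho') * exp (2 * L + 1)) as [B1 B2].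
  { split; [lra|]. replace (Q2 h T - w1 x) with ((Q2 h T - qw) - - (qw - w1 x)) by ring.
    rewrite <- Hsplit. apply abs_sub_le; [auto|]. rewrite Rabs_Ropp. lra. }
  apply (planar_gronwall (fun v => Q1 h v - 1) (fun v => Q2 h v - qw)
     (fun v => a11 v * (Q1 h v - 1) + a12 v * (Q2 h v - qw) + (a11 v + a12 v * qw + R1 h v / h))
     (fun v => a21 v * (Q1 h v - 1) + 0 * (Q2 h v - qw) + (a21 v + R2 h v / h))
     L (c0 + rho')); try (unfold L, c0; nra).
  - intros v _. destruct (quotient_derivable h v Hh0) as [D1 D2].
    pose proof (derivable_pt_lim_const 1 v). pose proof (derivable_pt_lim_const qw v). split.
    + eapply derivable_pt_lim_val; [apply (derivable_pt_lim_minus (fun v => Q1 h v)); eauto | ring].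
    + eapply derivable_pt_lim_val; [apply (derivable_pt_lim_minus (fun v => Q2 h v)); eauto | ring].
  - intros v Hv. destruct (coefficients_abs_le v Hv) as [A11 [A12 A21]].
    destruct (HR h Hh0 ltac:(lra) v Hv) as [HR1 HR2].
    assert (Rabs (a12 v * qw) <= Nphi * (Nw + 1))
      by (rewrite Rabs_mult; apply Rmult_le_compat; auto; apply Rabs_pos).
    pose proof (Rabs_triang (a11 v + a12 v * qw) (R1 h v / h)).
    pose proof (Rabs_triang (a11 v) (a12 v * qw)).
    pose proof (Rabs_triang (a21 v) (R2 h v / h)).
    split; apply linear_rate_le; try (rewrite ?Rabs_R0; unfold L, c0; nra).
  - destruct (quotients_at_0 h Hh0) as [-> ->]. fold qw. rewrite !Rminus_diag. lra.
Qed.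

Lemma flow_differentiable : exists dxi deta,
  derivable_pt_lim (fun y => xi T y) x dxi /\ derivable_pt_lim (fun y => eta T y) x deta /\
  Rabs (dxi - 1) <= (4 * Nw + 3) * Nphi * exp (2 * L + 1) /\
  Rabs (deta - w1 x) <= (4 * Nw + 3) * Nphi * exp (2 * L + 1).
Proof.
  destruct (derivable_of_cauchy_quotient (fun y => xi T y) x) as [dxi Dxi].
  { intros eps Heps. destruct (quotient_cauchy eps Heps) as [d [Hd Hc]].
    exists d. split; [auto|]. intros h h' ? ? ? ?. now apply Hc. }
  destruct (derivable_of_cauchy_quotient (fun y => eta T y) x) as [deta Deta].
  { intros eps Heps. destruct (quotient_cauchy eps Heps) as [d [Hd Hc]].
    exists d. split; [auto|]. intros h h' ? ? ? ?. now apply Hc. }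
  exists dxi, deta. do 2 (split; [assumption|]).
  split; [apply (derivative_dist_le (fun y => xi T y) x) |
          apply (derivative_dist_le (fun y => eta T y) x)]; auto; intros rho Hrho;
    destruct (quotient_near_linearization rho Hrho) as [d [Hd Hq]];
    exists d; split; auto; intros h ? ?; now apply Hq.
Qed.

End Variational.

Lemma drift_derivable w w1 w2 phi ph1 ph2 :
  (forall y, derivable_pt_lim w y (w1 y)) -> (forall y, derivable_pt_lim w1 y (w2 y)) ->
  (forall y, derivable_pt_lim phi y (ph1 y)) -> (forall y, derivable_pt_lim ph1 y (ph2 y)) ->
  forall y, derivable_pt_lim (fun y => - w1 y * phi y + w y * ph1 y) y
              (- w2 y * phi y + w y * ph2 y).
Proof.
  intros Dw Dw1 Dphi Dph1 y.
  apply (derivable_pt_lim_val _ _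
    ((- w2 y * phi y + - w1 y * ph1 y) + (w1 y * ph1 y + w y * ph2 y))); [|ring].
  apply (derivable_pt_lim_plus (fun y => - w1 y * phi y) (fun y => w y * ph1 y)).
  - apply (derivable_pt_lim_mult (fun y => - w1 y) phi); auto.
    now apply (derivable_pt_lim_opp w1).
  - now apply (derivable_pt_lim_mult w ph1).
Qed.

Lemma is_sup_norm_on_nonneg f fs a b N : is_sup_norm_on (f :: fs) a b N -> a <= b -> 0 <= N.
Proof.
  intros H Hab. apply (Rle_trans _ (Rabs (f a))); [apply Rabs_pos|].
  eapply is_sup_norm_on_abs_le; eauto; [now left | lra].
Qed.

Lemma bump_derivable c a b k : a < b ->
  (forall k, (k <= 3)%nat -> peval (pderivn k c) a = 0 /\ peval (pderivn k c) b = 0) ->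
  (k <= 2)%nat -> forall y,
  derivable_pt_lim (ext_zero (peval (pderivn k c)) a b) y
    (ext_zero (peval (pderivn (S k) c)) a b y).
Proof.
  intros Hab Hc Hk. destruct (Hc k ltac:(lia)), (Hc (S k) ltac:(lia)).
  apply ext_zero_derivable; auto. intros y. apply peval_derivable.
Qed.

Lemma bump_unif_continuous c a b k : a < b ->
  (forall k, (k <= 3)%nat -> peval (pderivn k c) a = 0 /\ peval (pderivn k c) b = 0) ->
  (k <= 2)%nat -> unif_continuous (ext_zero (peval (pderivn k c)) a b).
Proof.
  intros Hab Hc Hk. apply (unif_continuous_of_compact_support _ a b).
  - intros y. apply derivable_continuous_pt. eexists. now apply bump_derivable.
  - intros y Hy. now apply ext_zero_out.
Qed.

Lemma bump_flow_differentiable (w w1 w2 : R -> R) a b c (xi eta : R -> R -> R) Nw Nphi x T :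
  (forall y, derivable_pt_lim w y (w1 y)) -> (forall y, derivable_pt_lim w1 y (w2 y)) ->
  continuity w2 -> a < b ->
  (forall k, (k <= 3)%nat -> peval (pderivn k c) a = 0 /\ peval (pderivn k c) b = 0) ->
  (forall x t, derivable_pt_lim (fun u => xi u x) t
     (- w1 (xi t x) * phi_ext c a b (xi t x) - (eta t x - w (xi t x)) * dphi_ext c a b (xi t x))) ->
  (forall x t, derivable_pt_lim (fun u => eta u x) t (phi_ext c a b (xi t x))) ->
  (forall x, xi 0 x = x /\ eta 0 x = w x) ->
  is_sup_norm_on [w; w1; w2] a b Nw ->
  is_sup_norm_on [peval c; peval (pderiv c); peval (pderivn 2 c)] a b Nphi -> Nphi < 1 ->
  a <= x <= b -> 0 <= T <= 1 ->
  exists dxi deta,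
    derivable_pt_lim (fun y => xi T y) x dxi /\ derivable_pt_lim (fun y => eta T y) x deta /\
    Rabs (dxi - 1) <= (4 * Nw + 3) * Nphi * exp (6 * Nw + 5) /\
    Rabs (deta - w1 x) <= (4 * Nw + 3) * Nphi * exp (6 * Nw + 5).
Proof.
  intros Dw Dw1 Cw2 Hab Hc DX DE I0 HNw HNphi HN1 Hx HT.
  set (phi := phi_ext c a b) in *. set (ph1 := dphi_ext c a b) in *.
  set (ph2 := ext_zero (peval (pderivn 2 c)) a b).
  assert (Dphi : forall y, derivable_pt_lim phi y (ph1 y))
    by exact (bump_derivable c a b 0 Hab Hc ltac:(lia)).
  assert (Dph1 : forall y, derivable_pt_lim ph1 y (ph2 y))
    by exact (bump_derivable c a b 1 Hab Hc ltac:(lia)).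
  assert (Bw : forall f z, In f [w; w1; w2] -> a <= z <= b -> Rabs (f z) <= Nw)
    by (intros; eapply is_sup_norm_on_abs_le; eauto).
  assert (Bp : forall f z, In f [peval c; peval (pderiv c); peval (pderivn 2 c)] -> a <= z <= b ->
                Rabs (f z) <= Nphi) by (intros; eapply is_sup_norm_on_abs_le; eauto).
  pose proof (is_sup_norm_on_nonneg _ _ _ _ _ HNw ltac:(lra)).
  pose proof (is_sup_norm_on_nonneg _ _ _ _ _ HNphi ltac:(lra)).
  replace (6 * Nw + 5) with (2 * (3 * Nw + 2) + 1) by ring.
  apply (flow_differentiable w w1 (fun y => - w1 y * phi y + w y * ph1 y)
           (fun y => - w2 y * phi y + w y * ph2 y) phi ph1 ph2); auto.
  - now apply drift_derivable.
  - apply (unif_continuous_of_compact_support _ a b).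
    + intros y. apply continuity_pt_plus; apply continuity_pt_mult;
        [apply continuity_pt_opp, Cw2 | | | ]; apply derivable_continuous_pt;
        [exists (ph1 y); apply Dphi | exists (w1 y); apply Dw |
         eexists; now apply (bump_derivable c a b 2)].
    + intros y Hy. unfold phi, ph2, phi_ext. rewrite !ext_zero_out by auto. ring.
  - exact (bump_unif_continuous c a b 1 Hab Hc ltac:(lia)).
  - exact (bump_unif_continuous c a b 2 Hab Hc ltac:(lia)).
  - intros y. replace (2 * Nw * Nphi) with (Nw * Nphi + Nw * Nphi) by ring.
    eapply Rle_trans; [apply Rabs_triang|]. rewrite Ropp_mult_distr_l_reverse, Rabs_Ropp.
    apply Rplus_le_compat; apply mult_ext_zero_abs_le; auto;
      intros; apply Bw || apply Bp; cbn; auto.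
  - intros y. apply ext_zero_abs_le; auto. intros. apply Bp; cbn; auto.
  - intros y. apply ext_zero_abs_le; auto. intros. apply Bp; cbn; auto.
  - intros y. apply ext_zero_abs_le; auto. intros. apply Bp; cbn; auto.
  - apply Bw; cbn; auto.
  - apply Bw; cbn; auto.
  - intros y u. eapply derivable_pt_lim_val; [apply DX | ring].
Qed.

Lemma first_time_in_support (w w1 w2 : R -> R) a b c (xi eta : R -> R -> R) s x t0 :
  (forall y, derivable_pt_lim w y (w1 y)) -> (forall y, derivable_pt_lim w1 y (w2 y)) -> a < b ->
  (forall k, (k <= 3)%nat -> peval (pderivn k c) a = 0 /\ peval (pderivn k c) b = 0) ->
  (forall x t, derivable_pt_lim (fun u => xi u x) t
     (- w1 (xi t x) * phi_ext c a b (xi t x) - (eta t x - w (xi t x)) * dphi_ext c a b (xi t x))) ->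
  (forall x t, derivable_pt_lim (fun u => eta u x) t (phi_ext c a b (xi t x))) ->
  (forall x, xi 0 x = x /\ eta 0 x = w x) ->
  0 <= s -> is_first_time xi eta w (phi_ext c a b) s x t0 -> 0 < t0 ->
  a <= x <= b /\ t0 <= s.
Proof.
  intros Dw Dw1 Hab Hc DX DE I0 Hs [_ [_ Hfirst]] Ht0. destruct (I0 x) as [X0 E0].
  assert (Hcross : s * phi_ext c a b x <> 0).
  { intros Z. apply (Hfirst 0); [lra|]. rewrite X0, E0. lra. }
  split.
  - destruct (Rle_dec a x), (Rle_dec x b); try lra;
      exfalso; apply Hcross; unfold phi_ext; rewrite ext_zero_out by lra; ring.
  - apply (first_crossing_le w w1 (phi_ext c a b) (dphi_ext c a b)
             (fun u => xi u x) (fun u => eta u x));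
      try rewrite X0; auto.
    + intros y. apply derivable_continuous_pt. exists (w2 y). apply Dw1.
    + exact (bump_derivable c a b 0 Hab Hc ltac:(lia)).
    + intros y. apply derivable_continuous_pt. eexists.
      exact (bump_derivable c a b 1 Hab Hc ltac:(lia) y).
    + destruct (Req_dec s 0) as [->|]; [now rewrite Rmult_0_l in Hcross | lra].
    + intros Z. apply Hcross. rewrite Z. ring.
Qed.

Theorem proposition3p7 :
  exists C : R -> R, (forall M, 0 < C M) /\
  forall (w w1 w2 w3 : R -> R),
    (forall y, derivable_pt_lim w y (w1 y)) ->
    (forall y, derivable_pt_lim w1 y (w2 y)) ->
    (forall y, derivable_pt_lim w2 y (w3 y)) ->
    continuity w3 ->
    (exists T, 0 < T /\ forall y, w (y + T) = w y) ->
    (forall y, -1 <= y <= 1 -> 0 < w y) ->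
  forall (a b : R), -1 < a -> a < b -> b < 1 ->
  forall (c : list R),
    (forall k, (k <= 3)%nat ->
       peval (pderivn k c) a = 0 /\ peval (pderivn k c) b = 0) ->
  forall (xi eta : R -> R -> R),
    (forall x t,
       derivable_pt_lim (fun u => xi u x) t
         (- w1 (xi t x) * phi_ext c a b (xi t x)
          - (eta t x - w (xi t x)) * dphi_ext c a b (xi t x))) ->
    (forall x t,
       derivable_pt_lim (fun u => eta u x) t (phi_ext c a b (xi t x))) ->
    (forall x, xi 0 x = x /\ eta 0 x = w x) ->
  forall (Nw Nphi : R),
    is_sup_norm_on [w; w1; w2] a b Nw ->
    is_sup_norm_on [peval c; peval (pderiv c); peval (pderivn 2 c)] a b Nphi ->
    Nphi < 1 ->
  forall (s x t0 : R), 0 <= s <= 1 ->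
    is_first_time xi eta w (phi_ext c a b) s x t0 ->
  forall t, 0 <= t <= t0 ->
    exists dxi deta : R,
      derivable_pt_lim (fun y => xi t y) x dxi /\
      derivable_pt_lim (fun y => eta t y) x deta /\
      Rabs (dxi - 1) <= C Nw * Nphi /\
      Rabs (deta - w1 x) <= C Nw * Nphi.
Proof.
  exists (fun M => (4 * Rabs M + 3) * exp (6 * Rabs M + 5)). split.
  { intros M. pose proof (Rabs_pos M). pose proof (exp_pos (6 * Rabs M + 5)). nra. }
  intros w w1 w2 w3 Dw Dw1 Dw2 _ _ _ a b Ha Hab Hb c Hc xi eta DX DE I0 Nw Nphi HNw HNphi HN1
    s x t0 Hs Hfirst t Ht.
  pose proof (is_sup_norm_on_nonneg _ _ _ _ _ HNw ltac:(lra)).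
  pose proof (is_sup_norm_on_nonneg _ _ _ _ _ HNphi ltac:(lra)).
  rewrite Rabs_right by lra.
  replace ((4 * Nw + 3) * exp (6 * Nw + 5) * Nphi) with ((4 * Nw + 3) * Nphi * exp (6 * Nw + 5))
    by ring.
  destruct (Req_dec t 0) as [->|Ht_nz].
  - exists 1, (w1 x). repeat split.
    + apply (derivable_pt_lim_ext (fun y => y)); [intros y; now destruct (I0 y)|].
      apply derivable_pt_lim_id.
    + apply (derivable_pt_lim_ext w); [intros y; now destruct (I0 y)| apply Dw].
    + rewrite Rminus_diag, Rabs_R0. apply Rmult_le_pos; [nra | apply Rlt_le, exp_pos].
    + rewrite Rminus_diag, Rabs_R0. apply Rmult_le_pos; [nra | apply Rlt_le, exp_pos].
  - destruct (first_time_in_support w w1 w2 a b c xi eta s x t0) as [Hx Ht0s]; auto; try lra.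
    apply (bump_flow_differentiable w w1 w2 a b c); auto; [|lra].
    intros y. apply derivable_continuous_pt. exists (w3 y). apply Dw2.
Qed.
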